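(* Let $S,T\subseteq\mathbb{Z}_{>0}$ be finite and let $x$ be such that $T_{\ge x}\preceq S_{>x}$. Then $$T\triangleleft S=(T_{<x}\triangleleft S_{\le x})\sqcup(T_{\ge x}\triangleleft S_{>x}).$$
   Context: For a finite set $S\subseteq\mathbb{Z}_{>0}$, $S(i)$ is its $i$th smallest element, and $S_{<x},S_{\le x},S_{>x},S_{\ge x}$ denote the subsets of elements $<x$, $\le x$, $>x$, $\ge x$. For finite $S,T$, $T\triangleleft S$ is computed by going through $S$ from largest to smallest; each $s$ picks the largest element of $T$ less than $s$ not yet picked (if one exists); $T\triangleleft S$ is the set of picked elements. We write $T\preceq S$ ($S$ dominates $T$) if $|T|\ge|S|$ and $T(i)<S(i)$ for all $i\in[|S|]$. *)

From mathcomp Require Import all_boot all_order.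
From mathcomp Require Import finmap.
Set Implicit Arguments. Unset Strict Implicit. Unset Printing Implicit Defensive.
Local Open Scope fset_scope.

(* S(i) : the i-th smallest element, 0-indexed here (S(i+1) in the paper). *)
Definition ith (S : {fset nat}) (i : nat) : nat := nth 0 (sort leq (enum_fset S)) i.

Definition fset_lt (S : {fset nat}) (x : nat) : {fset nat} := [fset s in S | s < x].
Definition fset_le (S : {fset nat}) (x : nat) : {fset nat} := [fset s in S | s <= x].
Definition fset_gt (S : {fset nat}) (x : nat) : {fset nat} := [fset s in S | x < s].
Definition fset_ge (S : {fset nat}) (x : nat) : {fset nat} := [fset s in S | x <= s].

(* Greedy matching: process the elements of S in the list ss (from largest to
   smallest); each s picks the largest not-yet-picked element of T below s. *)
Fixpoint tri_aux (avail : {fset nat}) (ss : seq nat) : {fset nat} :=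
  match ss with
  | [::] => fset0
  | s :: ss' =>
      let B := [fset t in avail | t < s] in
      if B == fset0 then tri_aux avail ss'
      else let m := \max_(t <- enum_fset B) t in
           m |` tri_aux (avail `\ m) ss'
  end.

Definition tri (T S : {fset nat}) : {fset nat} :=
  tri_aux T (sort geq (enum_fset S)).

Definition dominated (T S : {fset nat}) : Prop :=
  #|` S| <= #|` T| /\ forall i, i < #|` S| -> ith T i < ith S i.

From mathcomp Require Import all_boot all_order.
From mathcomp Require Import finmap.
From mathcomp Require Import zify.
(* Processing S from the top, the elements of S_{>x} are matched first.  The
   domination T_{>=x} ≼ S_{>x} is Hall's condition for them, so each one still
   finds a free element >= x below it and, being greedy, picks exactly what it
   would pick inside T_{>=x}.  The remaining s <= x can only pick elements below
   x, none of which has been used, so they produce T_{<x} ◁ S_{<=x}.  The two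
   parts lie on opposite sides of x. *)

Set Implicit Arguments. Unset Strict Implicit. Unset Printing Implicit Defensive.
Local Open Scope fset_scope.

Lemma geq_trans : transitive geq. Proof. exact: rev_trans leq_trans. Qed.

Lemma geq_anti : antisymmetric geq.
Proof. by move=> m n /andP[nm mn]; apply/anti_leq/andP. Qed.

Lemma geq_total : total geq. Proof. by move=> m n; apply: leq_total. Qed.

Lemma sort_geq_rev (s : seq nat) : sort geq s = rev (sort leq s).
Proof.
apply: (sorted_eq geq_trans geq_anti); first exact: (sort_sorted geq_total).
  by rewrite rev_sorted; exact: (@sort_sorted _ leq leq_total).
by rewrite perm_sort perm_sym perm_rev perm_sort.
Qed.

Lemma sort_geq_split x (S : {fset nat}) :
  sort geq (enum_fset S) =
  sort geq (enum_fset (fset_gt S x)) ++ sort geq (enum_fset (fset_le S x)).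
Proof.
apply: (sorted_eq geq_trans geq_anti); first exact: (sort_sorted geq_total).
  rewrite sorted_pairwise; last exact: geq_trans.
  rewrite pairwise_cat -!sorted_pairwise; try exact: geq_trans.
  rewrite !(sort_sorted geq_total) !andbT.
  by apply/allrelP => s s'; rewrite !mem_sort !inE => /andP[_ xs] /andP[_ s'x]; lia.
apply: uniq_perm; first by rewrite sort_uniq fset_uniq.
  rewrite cat_uniq !sort_uniq !fset_uniq andbT /=; apply/hasPn => s.
  by rewrite !mem_sort !inE => /andP[_ sx]; apply/negP => /andP[_]; lia.
by move=> s; rewrite mem_cat !mem_sort !inE; case: (s \in S) => //=; lia.
Qed.

Lemma bigmax_mem (s : seq nat) : s != [::] -> \max_(t <- s) t \in s.
Proof.
case: s => // a s _; elim: s a => [|b s IH] a; first by rewrite big_seq1 mem_head.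
rewrite big_cons inE /maxn.
by case: ltnP => _; rewrite ?eqxx // IH orbT.
Qed.

Lemma bigmax_fset_mem (B : {fset nat}) : B != fset0 -> \max_(t <- B) t \in B.
Proof. by rewrite -cardfs_gt0 => B_gt0; apply: bigmax_mem; rewrite -size_eq0 -lt0n. Qed.

Lemma bigmax_fsub (A B : {fset nat}) :
  A `<=` B -> \max_(t <- B) t \in A -> \max_(t <- A) t = \max_(t <- B) t.
Proof.
move=> /fsubsetP AB maxB_A; apply/anti_leq/andP; split.
  by apply/bigmax_leqP_seq => t tA _; apply: leq_bigmax_seq => //; apply: AB.
exact: leq_bigmax_seq.
Qed.

Lemma tri_aux_sub A l : tri_aux A l `<=` A.
Proof.
elim: l A => [|s l IH] A /=; first exact: fsub0set.
case: ifPn => [_|/bigmax_fset_mem]; first exact: IH.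
rewrite fsubUset fsub1set !inE => /andP[mA _]; rewrite mA /=.
exact: fsubset_trans (IH _) (fsubD1set _ _).
Qed.

Lemma tri_aux_cat A l1 l2 :
  tri_aux A (l1 ++ l2) = tri_aux A l1 `|` tri_aux (A `\` tri_aux A l1) l2.
Proof.
elim: l1 A => [|s l IH] A /=; first by rewrite fset0U fsetD0.
case: ifP => _; first exact: IH.
by rewrite IH -fsetUA fsetDDl.
Qed.

Lemma tri_aux_lt x A l :
  all (fun s => s <= x) l -> tri_aux A l = tri_aux (fset_lt A x) l.
Proof.
elim: l A => [|s l IH] A //= /andP[sx lx].
have -> : [fset t in A | t < s] = [fset t in fset_lt A x | t < s].
  by apply/fsetP => t; rewrite !inE; case: (t \in A); rewrite //=; lia.
case: ifP => _; first exact: IH.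
congr (_ |` _); rewrite IH //; congr tri_aux.
by apply/fsetP => t; rewrite !inE andbA.
Qed.

(* Hall's condition for matching the decreasing list [l] greedily into [B]:
   the [size l - p] entries from position [p] on are all at most [l_p], so
   they need that many elements of [B] below [l_p]. *)
Definition hall (B : {fset nat}) (l : seq nat) :=
  forall p, p < size l -> size l - p <= #|` [fset t in B | t < nth 0 l p]|.

Lemma hall_behead B a l m :
  sorted geq (a :: l) -> hall B (a :: l) -> m \in B -> m < a ->
  (forall t, t \in B -> t < a -> t <= m) -> hall (B `\ m) l.
Proof.
move=> sorted_al hall_al mB ma m_max p lp; set b := nth 0 l p.
have ba : b <= a by apply: (allP (order_path_min geq_trans sorted_al)); apply: mem_nth.
have -> : [fset t in B `\ m | t < b] = [fset t in B | t < b] `\ m.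
  by apply/fsetP => t; rewrite !inE andbA.
have := cardfsD1 m [fset t in B | t < b]; rewrite !inE mB /=.
case: ltnP => [mb|bm]; last by have := hall_al p.+1 lp; rewrite /= subSS -/b; lia.
have -> : [fset t in B | t < b] = [fset t in B | t < a].
  apply/fsetP => t; rewrite !inE; case tB: (t \in B) => //=.
  apply/idP/idP => [tb|ta]; first exact: leq_trans ba.
  exact: leq_ltn_trans (m_max t tB ta) mb.
by have := hall_al 0 isT; rewrite subn0 /=; lia.
Qed.

(* Under Hall's condition some [t >= x] is still free below each [s], so the
   greedy choice, the largest free element below [s], is always [>= x]. *)
Lemma tri_aux_ge x A l :
  sorted geq l -> hall (fset_ge A x) l -> tri_aux A l = tri_aux (fset_ge A x) l.
Proof.
elim: l A => [|a l IH] A //= sorted_al hall_al.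
set Aa := [fset t in A | t < a]; set Ba := [fset t in fset_ge A x | t < a].
have Ba_sub : Ba `<=` Aa by apply/fsubsetP => t; rewrite !inE => /andP[/andP[-> _] ->].
have nBa : Ba != fset0 by rewrite -cardfs_gt0; apply: leq_trans (hall_al 0 isT).
have [t0 t0Ba] := fset0Pn _ nBa.
have nAa : Aa != fset0 by apply/fset0Pn; exists t0; apply: (fsubsetP Ba_sub).
have := bigmax_fset_mem nAa; set m := \max_(t <- Aa) t => mAa.
have m_max t : t \in Aa -> t <= m by move=> tAa; apply: leq_bigmax_seq.
have mBa : m \in Ba.
  move: mAa t0Ba (m_max t0 (fsubsetP Ba_sub _ t0Ba)); rewrite !inE.
  by move=> /andP[-> ->] /andP[/andP[_ xt0] _] t0m; rewrite (leq_trans xt0 t0m).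
rewrite (negbTE nAa) (negbTE nBa) (bigmax_fsub Ba_sub mBa).
have geD : fset_ge (A `\ m) x = fset_ge A x `\ m.
  by apply/fsetP => t; rewrite !inE andbA.
congr (m |` _); rewrite -geD; apply: IH; first exact: path_sorted sorted_al.
have [mB ma] : m \in fset_ge A x /\ m < a by move: mBa; rewrite inE => /andP.
rewrite geD; apply: hall_behead sorted_al hall_al mB ma _ => t tB ta.
by apply: m_max; move: tB; rewrite !inE ta => /andP[-> _].
Qed.

Lemma dominated_card_lt T S i :
  dominated T S -> i < #|` S| -> i < #|` [fset t in T | t < ith S i]|.
Proof.
move=> [ST T_lt_S] iS; set LT := sort leq (enum_fset T).
have iLT : i < size LT by rewrite size_sort; apply: leq_trans ST.
have -> : i.+1 = size (take i.+1 LT) by rewrite size_takel.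
apply: uniq_leq_size; first by rewrite take_uniq // sort_uniq fset_uniq.
move=> y /(nthP 0)[j]; rewrite size_takel // ltnS => ji <-.
rewrite nth_take ?ltnS // !inE.
have : nth 0 LT j \in LT by apply: mem_nth; apply: leq_ltn_trans iLT.
rewrite mem_sort => -> /=; apply: leq_ltn_trans (T_lt_S i iS).
apply: (sorted_leq_nth leq_trans leqnn 0 (sort_sorted leq_total _)) => //.
by rewrite inE (leq_ltn_trans ji).
Qed.

Lemma dominated_hall T S : dominated T S -> hall T (sort geq (enum_fset S)).
Proof.
move=> TS p; rewrite size_sort => pS.
rewrite sort_geq_rev nth_rev ?size_sort //.
rewrite -subnSK //; apply: dominated_card_lt => //.
by rewrite ltn_subrL (leq_ltn_trans (leq0n p) pS).
Qed.

Theorem proposition4p12 (S T : {fset nat}) (x : nat) :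
  (forall s, s \in S -> 0 < s) ->
  (forall t, t \in T -> 0 < t) ->
  dominated (fset_ge T x) (fset_gt S x) ->
  tri T S = tri (fset_lt T x) (fset_le S x) `|` tri (fset_ge T x) (fset_gt S x)
  /\ tri (fset_lt T x) (fset_le S x) `&` tri (fset_ge T x) (fset_gt S x) = fset0.
Proof.
move=> _ _ dom.
have high : tri T (fset_gt S x) = tri (fset_ge T x) (fset_gt S x).
  by apply: tri_aux_ge; [exact: (sort_sorted geq_total) | exact: dominated_hall].
have high_ge : {subset tri (fset_ge T x) (fset_gt S x) <= fset_ge T x}.
  exact/fsubsetP/tri_aux_sub.
have low_lt : {subset tri (fset_lt T x) (fset_le S x) <= fset_lt T x}.
  exact/fsubsetP/tri_aux_sub.
have low : tri_aux (T `\` tri T (fset_gt S x)) (sort geq (enum_fset (fset_le S x)))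
           = tri (fset_lt T x) (fset_le S x).
  rewrite (@tri_aux_lt x); last by apply/allP => s; rewrite mem_sort !inE => /andP[].
  congr tri_aux; apply/fsetP => t; rewrite high !inE.
  case: (boolP (t \in tri _ _)) => //= /high_ge.
  by rewrite !inE => /andP[_ xt]; rewrite ltnNge xt andbF.
split; first by rewrite /tri (sort_geq_split x) tri_aux_cat -/(tri T _) low high fsetUC.
apply/fsetP => t; rewrite !inE; apply/negbTE/andP => -[/low_lt tlt /high_ge tge].
by move: tlt tge; rewrite !inE => /andP[_ tx] /andP[_ /(leq_trans tx)]; rewrite ltnn.
Qed.
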